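(* In the setting described in the context, the quantum dimension \[ \dim_1:=(\ ,\ )_1(g_1) \] satisfies, modulo $\lambda^2$, \[ \dim_1=n+\frac{\lambda}{2}\{g_{\mu\nu},g^{\mu\nu}\}=n+\frac{\lambda}{2}\,\omega^{\alpha\beta}g_{\mu\nu,\alpha}\,g^{\mu\nu}{}_{,\beta}, \] where $n=\dim M$.
   Context: Let $M$ be a smooth $n$-manifold with local coordinates $x^\mu$. Commas denote partial derivatives ($f_{,\alpha}=\partial_\alpha f$) and repeated indices are summed. $g_{\mu\nu}$ is a (pseudo-)Riemannian metric with inverse $g^{\mu\nu}$, which is used to raise and lower indices. $\widehat\Gamma^\alpha{}_{\beta\gamma}$ are its Levi-Civita Christoffel symbols and $\widehat\nabla$ is its Levi-Civita connection. $\nabla$ is a further linear connection with Christoffel symbols $\Gamma^\alpha{}_{\beta\gamma}$, in the convention $\nabla_\beta dx^\alpha=-\Gamma^\alpha{}_{\beta\gamma}dx^\gamma$. Thus $\nabla_\beta\eta_\alpha=\partial_\beta\eta_\alpha-\eta_\gamma\Gamma^\gamma{}_{\beta\alpha}$ and $\nabla_\beta V^\alpha=\partial_\beta V^\alpha+\Gamma^\alpha{}_{\beta\gamma}V^\gamma$, extended to all tensors in the usual way; a semicolon also denotes $\nabla$. The associated tensors are: - torsion $T^\alpha{}_{\beta\gamma}=\Gamma^\alpha{}_{\beta\gamma}-\Gamma^\alpha{}_{\gamma\beta}$; - curvature $R^\alpha{}_{\beta\gamma\delta}=\Gamma^\alpha{}_{\delta\beta,\gamma}-\Gamma^\alpha{}_{\gamma\beta,\delta}+\Gamma^\kappa{}_{\delta\beta}\Gamma^\alpha{}_{\gamma\kappa}-\Gamma^\kappa{}_{\gamma\beta}\Gamma^\alpha{}_{\delta\kappa}$;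 - contorsion $S^\alpha{}_{\beta\gamma}=\Gamma^\alpha{}_{\beta\gamma}-\widehat\Gamma^\alpha{}_{\beta\gamma}$; - lowered symbols $\Gamma_{\mu\beta\nu}=g_{\mu\kappa}\Gamma^\kappa{}_{\beta\nu}$. Standing assumptions: - $\nabla$ is metric compatible, $\nabla g=0$, equivalently $g_{\mu\nu,\beta}=\Gamma_{\mu\beta\nu}+\Gamma_{\nu\beta\mu}$. - $\omega^{\alpha\beta}=-\omega^{\beta\alpha}$ is a Poisson bivector (it satisfies the Jacobi identity), with $\{f,h\}=\omega^{\alpha\beta}f_{,\alpha}h_{,\beta}$. - $\nabla$ is Poisson-compatible: $\nabla_\gamma\omega^{\alpha\beta}+T^\alpha{}_{\delta\gamma}\omega^{\delta\beta}+T^\beta{}_{\delta\gamma}\omega^{\alpha\delta}=0$. $\lambda$ is a formal parameter and all identities are taken modulo $\lambda^2$. The quantised products, for functions $f,h$ and 1-forms $\eta$, are - $f\bullet h=fh+\frac\lambda2\{f,h\}$; - $f\bullet\eta=f\eta+\frac\lambda2\omega^{\alpha\beta}f_{,\alpha}\nabla_\beta\eta$; - $\eta\bullet f=\eta f-\frac\lambda2\omega^{\alpha\beta}f_{,\alpha}\nabla_\beta\eta$. Commutators are $[f,\eta]=f\bullet\eta-\eta\bullet f$. Quantum metric data: - $\otimes_1$ is the tensor product of 1-forms over the quantised function algebra, i.e. it satisfies $\eta\bullet f\otimes_1\zeta=\eta\otimes_1 f\bullet\zeta$. - $\mathcal R_{\mu\nu}=\frac12 g_{\alpha\beta}\omega^{\alpha\gamma}(\nabla_\gamma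 T^\beta{}_{\mu\nu}-R^\beta{}_{\mu\nu\gamma}+R^\beta{}_{\nu\mu\gamma})$. - $h_{\mu\nu}=\mathcal R_{\mu\nu}+\omega^{\alpha\beta}(\Gamma_{\mu\alpha\kappa}\Gamma^\kappa{}_{\beta\nu}+\Gamma^\gamma{}_{\alpha\mu}g_{\gamma\nu,\beta})$, which is antisymmetric. - $\tilde g_{\mu\nu}=g_{\mu\nu}+\frac\lambda2h_{\mu\nu}$, and the quantum metric is $g_1=dx^\mu\bullet\tilde g_{\mu\nu}\otimes_1dx^\nu$. - $\tilde g^{\mu\nu}$ is the $\bullet$-inverse matrix: $\tilde g_{\mu\nu}\bullet\tilde g^{\nu\gamma}=\delta_\mu^\gamma=\tilde g^{\gamma\nu}\bullet\tilde g_{\nu\mu}$. - $(\ ,\ )_1:\Omega^1\otimes_1\Omega^1\to C^\infty(M)$ is the bimodule map with $(dx^\mu,dx^\nu)_1=\tilde g^{\mu\nu}$ and $(f\bullet\eta,\zeta\bullet k)_1=f\bullet(\eta,\zeta)_1\bullet k$. *)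

(* Local-coordinate model of the setting of Proposition 2.1.
   - A : commutative R-algebra (R a numeric field, e.g. the reals) playing the
     role of the algebra of smooth functions on a coordinate chart;
   - d i : the coordinate partial derivative d/dx^i (i : 'I_n), axiomatised as
     n commuting R-linear derivations;
   - an element of A * A, (a0, a1), stands for a0 + lambda a1 (mod lambda^2);
   - a 1-form mod lambda^2 is its coefficient vector w.r.t. dx^0..dx^(n-1),
     eta = sum_c (eta c) dx^c, with coefficients in A * A. *)
From HB Require Import structures.
From mathcomp Require Import all_boot all_order all_algebra.
Set Implicit Arguments.
Unset Strict Implicit.
Unset Printing Implicit Defensive.
Import GRing.Theory Num.Theory.
Local Open Scope ring_scope.

Definition halfR (R : numFieldType) : R := 2^-1.

Definition derivations (R : numFieldType) (A : comAlgType R) (n : nat)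
  (d : 'I_n -> A -> A) : Prop :=
  [/\ (forall i x y, d i (x + y) = d i x + d i y),
      (forall i x y, d i (x * y) = d i x * y + x * d i y),
      (forall i (c : R) x, d i (c *: x) = c *: d i x)
    & (forall i j x, d i (d j x) = d j (d i x))].

Definition pbr (R : numFieldType) (A : comAlgType R) (n : nat)
  (d : 'I_n -> A -> A) (om : 'I_n -> 'I_n -> A) (f h : A) : A :=
  \sum_(a < n) \sum_(b < n) om a b * d a f * d b h.

Definition jacobi (R : numFieldType) (A : comAlgType R) (n : nat)
  (d : 'I_n -> A -> A) (om : 'I_n -> 'I_n -> A) : Prop :=
  forall a b c, \sum_(e < n) (om a e * d e (om b c) + om b e * d e (om c a)
                              + om c e * d e (om a b)) = 0.

(* Gam a b c = Gamma^a_{bc} *)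
Definition torsion (A : zmodType) (n : nat) (Gam : 'I_n -> 'I_n -> 'I_n -> A)
  (a b c : 'I_n) : A := Gam a b c - Gam a c b.

(* curv a b c e = R^a_{bce} *)
Definition curv (R : numFieldType) (A : comAlgType R) (n : nat)
  (d : 'I_n -> A -> A) (Gam : 'I_n -> 'I_n -> 'I_n -> A) (a b c e : 'I_n) : A :=
  d c (Gam a e b) - d e (Gam a c b)
  + \sum_(k < n) Gam k e b * Gam a c k - \sum_(k < n) Gam k c b * Gam a e k.

Definition Gam_low (R : numFieldType) (A : comAlgType R) (n : nat)
  (g : 'I_n -> 'I_n -> A) (Gam : 'I_n -> 'I_n -> 'I_n -> A) (m b v : 'I_n) : A :=
  \sum_(k < n) g m k * Gam k b v.

Definition metric_compat (R : numFieldType) (A : comAlgType R) (n : nat)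
  (d : 'I_n -> A -> A) (g : 'I_n -> 'I_n -> A) (Gam : 'I_n -> 'I_n -> 'I_n -> A) : Prop :=
  forall m b v, d b (g m v) = Gam_low g Gam m b v + Gam_low g Gam v b m.

Definition nabla_om (R : numFieldType) (A : comAlgType R) (n : nat)
  (d : 'I_n -> A -> A) (om : 'I_n -> 'I_n -> A) (Gam : 'I_n -> 'I_n -> 'I_n -> A)
  (c a b : 'I_n) : A :=
  d c (om a b) + \sum_(e < n) Gam a c e * om e b + \sum_(e < n) Gam b c e * om a e.

Definition poisson_compat (R : numFieldType) (A : comAlgType R) (n : nat)
  (d : 'I_n -> A -> A) (om : 'I_n -> 'I_n -> A) (Gam : 'I_n -> 'I_n -> 'I_n -> A) : Prop :=
  forall c a b, nabla_om d om Gam c a b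
     + \sum_(e < n) torsion Gam a e c * om e b
     + \sum_(e < n) torsion Gam b e c * om a e = 0.

Definition nabla_T (R : numFieldType) (A : comAlgType R) (n : nat)
  (d : 'I_n -> A -> A) (Gam : 'I_n -> 'I_n -> 'I_n -> A) (c b m v : 'I_n) : A :=
  d c (torsion Gam b m v) + \sum_(k < n) Gam b c k * torsion Gam k m v
  - \sum_(k < n) torsion Gam b k v * Gam k c m
  - \sum_(k < n) torsion Gam b m k * Gam k c v.

Definition calR (R : numFieldType) (A : comAlgType R) (n : nat)
  (d : 'I_n -> A -> A) (om : 'I_n -> 'I_n -> A) (Gam : 'I_n -> 'I_n -> 'I_n -> A)
  (g : 'I_n -> 'I_n -> A) (m v : 'I_n) : A :=
  halfR R *: \sum_(a < n) \sum_(b < n) \sum_(c < n)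
     g a b * om a c * (nabla_T d Gam c b m v - curv d Gam b m v c + curv d Gam b v m c).

Definition hq (R : numFieldType) (A : comAlgType R) (n : nat)
  (d : 'I_n -> A -> A) (om : 'I_n -> 'I_n -> A) (Gam : 'I_n -> 'I_n -> 'I_n -> A)
  (g : 'I_n -> 'I_n -> A) (m v : 'I_n) : A :=
  calR d om Gam g m v
  + \sum_(a < n) \sum_(b < n) om a b *
      (\sum_(k < n) Gam_low g Gam m a k * Gam k b v
       + \sum_(c < n) Gam c a m * d b (g c v)).

Definition gtilde (R : numFieldType) (A : comAlgType R) (n : nat)
  (d : 'I_n -> A -> A) (om : 'I_n -> 'I_n -> A) (Gam : 'I_n -> 'I_n -> 'I_n -> A)
  (g : 'I_n -> 'I_n -> A) (m v : 'I_n) : A * A :=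
  (g m v, halfR R *: hq d om Gam g m v).

Definition qadd (A : zmodType) (x y : A * A) : A * A := (x.1 + y.1, x.2 + y.2).

(* f . h = f h + lambda/2 {f,h}, extended lambda-linearly *)
Definition qmul (R : numFieldType) (A : comAlgType R) (n : nat)
  (d : 'I_n -> A -> A) (om : 'I_n -> 'I_n -> A) (x y : A * A) : A * A :=
  (x.1 * y.1, x.1 * y.2 + x.2 * y.1 + halfR R *: pbr d om x.1 y.1).

Definition qform (A : Type) (n : nat) := 'I_n -> A * A.

Definition fadd (A : zmodType) (n : nat) (eta zeta : qform A n) : qform A n :=
  fun c => qadd (eta c) (zeta c).

Definition dx (A : nzRingType) (n : nat) (mu : 'I_n) : qform A n :=
  fun c => ((c == mu)%:R, 0).
Arguments dx {A n} mu.

Definition nabla_form (R : numFieldType) (A : comAlgType R) (n : nat)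
  (d : 'I_n -> A -> A) (Gam : 'I_n -> 'I_n -> 'I_n -> A)
  (eta : 'I_n -> A) (b c : 'I_n) : A :=
  d b (eta c) - \sum_(k < n) eta k * Gam k b c.

(* f . eta = f eta + lambda/2 om^{ab} f_{,a} nabla_b eta  (lambda-linearly) *)
Definition fdotl (R : numFieldType) (A : comAlgType R) (n : nat)
  (d : 'I_n -> A -> A) (om : 'I_n -> 'I_n -> A) (Gam : 'I_n -> 'I_n -> 'I_n -> A)
  (f : A * A) (eta : qform A n) : qform A n :=
  fun c => (f.1 * (eta c).1,
            f.1 * (eta c).2 + f.2 * (eta c).1
            + halfR R *: \sum_(a < n) \sum_(b < n)
                om a b * d a f.1 * nabla_form d Gam (fun k => (eta k).1) b c).

(* eta . f = eta f - lambda/2 om^{ab} f_{,a} nabla_b eta  (lambda-linearly) *)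
Definition fdotr (R : numFieldType) (A : comAlgType R) (n : nat)
  (d : 'I_n -> A -> A) (om : 'I_n -> 'I_n -> A) (Gam : 'I_n -> 'I_n -> 'I_n -> A)
  (eta : qform A n) (f : A * A) : qform A n :=
  fun c => ((eta c).1 * f.1,
            (eta c).2 * f.1 + (eta c).1 * f.2
            - halfR R *: \sum_(a < n) \sum_(b < n)
                om a b * d a f.1 * nabla_form d Gam (fun k => (eta k).1) b c).

(* ( , )_1 : a map on pairs of 1-forms which is biadditive, balanced
   (hence factors through the tensor product over the quantised algebra) and
   a bimodule map, with (dx^m, dx^v)_1 = gtinv m v. *)
Definition quantum_inner (R : numFieldType) (A : comAlgType R) (n : nat)
  (d : 'I_n -> A -> A) (om : 'I_n -> 'I_n -> A) (Gam : 'I_n -> 'I_n -> 'I_n -> A)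
  (gtinv : 'I_n -> 'I_n -> A * A) (P : qform A n -> qform A n -> A * A) : Prop :=
  [/\ (forall eta eta' zeta, P (fadd eta eta') zeta = qadd (P eta zeta) (P eta' zeta)),
      (forall eta zeta zeta', P eta (fadd zeta zeta') = qadd (P eta zeta) (P eta zeta')),
      (forall eta f zeta, P (fdotr d om Gam eta f) zeta = P eta (fdotl d om Gam f zeta)),
      (forall f eta zeta k, P (fdotl d om Gam f eta) (fdotr d om Gam zeta k)
                          = qmul d om (qmul d om f (P eta zeta)) k)
    & (forall m v, P (dx m) (dx v) = gtinv m v)].

Definition qsum2 (A : zmodType) (n : nat) (F : 'I_n -> 'I_n -> A * A) : A * A :=
  (\sum_(m < n) \sum_(v < n) (F m v).1, \sum_(m < n) \sum_(v < n) (F m v).2).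

Definition qsum (A : zmodType) (n : nat) (F : 'I_n -> A * A) : A * A :=
  (\sum_(v < n) (F v).1, \sum_(v < n) (F v).2).

(* Commuting dx^m past f costs lambda om^{ab} f_{,a} Gam^m_{bc} dx^c, so by the bimodule property
   of ( , )_1 the quantum dimension is sum_{mv} g~_{mv} . g~^{mv} plus
   lambda om^{ab} g_{mv,a} Gam^m_{bc} g^{cv}.  As g~^{mv} has classical part g^{mv} and g is
   symmetric, the first sum agrees with the trace of g~ . g~^{-1}, i.e. with n.  The lambda-term and
   the bracket {g_{mv}, g^{mv}} both contract the antisymmetric om^{ab} with something symmetric in
   (a, b): the bracket gives -tr(g^{-1} g_{,a} g^{-1} g_{,b}) since (g^{-1})_{,b} =
   -g^{-1} g_{,b} g^{-1}, and metric compatibility g_{,b} = g Gam_b + Gam_b^T g turns the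
   Christoffel term into half of tr(g^{-1} g_{,a} g^{-1} g_{,b}).  So both vanish and dim_1 = n. *)

From HB Require Import structures.
From mathcomp Require Import all_boot all_order all_algebra.
From mathcomp Require Import ring.
From Stdlib Require Import FunctionalExtensionality.
Import GRing.Theory Num.Theory.
Local Open Scope ring_scope.

Set Implicit Arguments.
Unset Strict Implicit.

Lemma scale_halfRD (R : numFieldType) (V : lmodType R) (x : V) :
  halfR R *: x + halfR R *: x = x.
Proof. by rewrite -scalerDl /halfR -[RHS]scale1r [in RHS](splitr 1) mul1r. Qed.

Lemma addrr_inj (R : numFieldType) (V : lmodType R) (x y : V) :
  x + x = y + y -> x = y.
Proof. by move=> xy; rewrite -[x]scale_halfRD -[y]scale_halfRD -!scalerDr xy. Qed.

Lemma sum_delta (A : nzSemiRingType) (n : nat) (m : 'I_n) (F : 'I_n -> A) :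
  \sum_(k < n) (k == m)%:R * F k = F m.
Proof.
rewrite (bigD1 m) //= eqxx mul1r big1 ?addr0 // => k /negbTE ->.
by rewrite mul0r.
Qed.

Lemma sum_antisym (R : numFieldType) (A : lalgType R) (n : nat)
    (om F : 'I_n -> 'I_n -> A) :
  (forall a b, om a b = - om b a) -> (forall a b, F a b = F b a) ->
  \sum_(a < n) \sum_(b < n) om a b * F a b = 0.
Proof.
move=> om_anti F_sym; set s := (X in X = 0).
have s_opp : s = - s.
  rewrite {1}/s exchange_big /= -sumrN; apply: eq_bigr => b _.
  by rewrite -sumrN; apply: eq_bigr => a _; rewrite om_anti F_sym mulNr.
by apply: addrr_inj; rewrite addr0 {1}s_opp addNr.
Qed.

Lemma sum4_antisym (R : numFieldType) (A : lalgType R) (n : nat)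
    (om : 'I_n -> 'I_n -> A) (F : 'I_n -> 'I_n -> 'I_n -> 'I_n -> A) :
  (forall a b, om a b = - om b a) ->
  (forall a b, \sum_(m < n) \sum_(v < n) F a b m v
             = \sum_(m < n) \sum_(v < n) F b a m v) ->
  \sum_(m < n) \sum_(v < n) \sum_(a < n) \sum_(b < n) om a b * F a b m v = 0.
Proof.
move=> om_anti F_sym; rewrite -[RHS](sum_antisym om_anti F_sym).
under eq_bigr do rewrite exchange_big /=.
rewrite exchange_big; apply: eq_bigr => a _.
under eq_bigr do rewrite exchange_big /=.
rewrite exchange_big; apply: eq_bigr => b _.
by rewrite mulr_sumr; apply: eq_bigr => m _; rewrite mulr_sumr.
Qed.

Lemma sum_mul_mxtrace (A : comNzRingType) (n : nat) (f h : 'I_n -> 'I_n -> A) :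
  \sum_(m < n) \sum_(v < n) f m v * h m v
  = \tr ((\matrix_(i, j) f i j) *m (\matrix_(i, j) h i j)^T).
Proof. by apply: eq_bigr => i _; rewrite mxE; apply: eq_bigr => j _; rewrite !mxE. Qed.

Lemma mulmx_delta (A : comNzRingType) (n : nat) (f h : 'I_n -> 'I_n -> A) :
  (forall m c, \sum_(v < n) f m v * h v c = (m == c)%:R) ->
  (\matrix_(i, j) f i j) *m (\matrix_(i, j) h i j) = 1%:M.
Proof.
by move=> fh; apply/matrixP => i j; rewrite !mxE -fh; apply: eq_bigr => k _; rewrite !mxE.
Qed.

Section Derivations.
Variables (R : numFieldType) (A : comAlgType R) (n : nat) (d : 'I_n -> A -> A).
Hypothesis dD : derivations d.

Lemma derivation0 i : d i 0 = 0.
Proof. by have [dadd _ _ _] := dD; apply: (addrI (d i 0)); rewrite -dadd !addr0. Qed.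

Lemma derivation1 i : d i 1 = 0.
Proof.
have [_ dmul _ _] := dD; have := dmul i 1 1; rewrite !mulr1 mul1r => d11.
by apply: (addrI (d i 1)); rewrite -d11 addr0.
Qed.

Lemma derivation_delta i (m v : 'I_n) : d i (m == v)%:R = 0.
Proof. by case: (m == v); [exact: derivation1 | exact: derivation0]. Qed.

Lemma derivation_sum i (F : 'I_n -> A) :
  d i (\sum_(k < n) F k) = \sum_(k < n) d i (F k).
Proof. by have [dadd _ _ _] := dD; exact: (big_morph _ (dadd i) (derivation0 i)). Qed.

Lemma pbr0l om x : pbr d om 0 x = 0.
Proof.
by rewrite /pbr big1 // => a _; rewrite big1 // => b _; rewrite derivation0 mulr0 mul0r.
Qed.

Lemma pbr1r om x : pbr d om x 1 = 0.
Proof. by rewrite /pbr big1 // => a _; rewrite big1 // => b _; rewrite derivation1 mulr0. Qed.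

End Derivations.

Section MetricInverse.
Variables (R : numFieldType) (A : comAlgType R) (n : nat).
Variables (d : 'I_n -> A -> A) (g ginv : 'I_n -> 'I_n -> A).
Hypotheses (dD : derivations d) (g_sym : forall m v, g m v = g v m).
Hypotheses (g_ginv : forall m c, \sum_(v < n) g m v * ginv v c = (m == c)%:R)
           (ginv_g : forall m c, \sum_(v < n) ginv m v * g v c = (m == c)%:R).

Local Notation G := (\matrix_(i, j) g i j).
Local Notation Gi := (\matrix_(i, j) ginv i j).
Local Notation dG a := (\matrix_(i, j) d a (g i j)).
Local Notation dGi a := (\matrix_(i, j) d a (ginv i j)).

Let GGi : G *m Gi = 1%:M. Proof. exact: mulmx_delta. Qed.
Let GiG : Gi *m G = 1%:M. Proof. exact: mulmx_delta. Qed.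
Let trG : G^T = G. Proof. by apply/matrixP => i j; rewrite !mxE g_sym. Qed.
Let trdG a : (dG a)^T = dG a. Proof. by apply/matrixP => i j; rewrite !mxE g_sym. Qed.

Let trGi : Gi^T = Gi.
Proof. by rewrite -[Gi^T]mulmx1 -GGi mulmxA -{1}trG -trmx_mul GGi trmx1 mul1mx. Qed.

Lemma ginv_sym m v : ginv m v = ginv v m.
Proof. by have := congr1 (fun M : 'M_n => M v m) trGi; rewrite !mxE. Qed.

Lemma right_inverse_unique (h : 'I_n -> 'I_n -> A) :
  (forall m c, \sum_(v < n) g m v * h v c = (m == c)%:R) -> forall m v, h m v = ginv m v.
Proof.
move=> g_h; have Gh : G *m \matrix_(i, j) h i j = 1%:M by exact: mulmx_delta.
have hGi : \matrix_(i, j) h i j = Gi by rewrite -[LHS]mul1mx -GiG -mulmxA Gh mulmx1.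
by move=> m v; have := congr1 (fun M : 'M_n => M m v) hGi; rewrite !mxE.
Qed.

(* Differentiating g g^{-1} = 1. *)
Let dGiE a : dGi a = - (Gi *m dG a *m Gi).
Proof.
have GdGi : G *m dGi a = - (dG a *m Gi).
  apply/eqP; rewrite -addr_eq0; apply/eqP/matrixP => i j; rewrite !mxE.
  rewrite -big_split /= -[RHS](derivation_delta dD a i j) -g_ginv derivation_sum //.
  by have [_ dmul _ _] := dD; apply: eq_bigr => k _; rewrite !mxE dmul addrC.
by rewrite -[dGi a]mul1mx -GiG -mulmxA GdGi mulmxN mulmxA.
Qed.

Let trdGi a : (dGi a)^T = dGi a.
Proof. by apply/matrixP => i j; rewrite !mxE ginv_sym. Qed.

Let mxtrace_GiC X Y : \tr (X *m Gi *m Y *m Gi) = \tr (Y *m Gi *m X *m Gi).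
Proof. by rewrite -mulmxA mxtrace_mulC mulmxA. Qed.

Lemma pbr_metric_inverse_sum om : (forall a b, om a b = - om b a) ->
  \sum_(m < n) \sum_(v < n) \sum_(a < n) \sum_(b < n)
     om a b * d a (g m v) * d b (ginv m v) = 0.
Proof.
move=> om_anti; under eq_bigr do under eq_bigr do under eq_bigr do
  under eq_bigr do rewrite -mulrA.
apply: sum4_antisym => // a b.
rewrite !(sum_mul_mxtrace (fun m v => d _ (g m v)) (fun m v => d _ (ginv m v))).
by rewrite !trdGi !dGiE !mulmxN !linearN /= !mulmxA mxtrace_GiC.
Qed.

Lemma christoffel_metric_inverse_sum Gam om :
  metric_compat d g Gam -> (forall a b, om a b = - om b a) ->
  \sum_(m < n) \sum_(v < n) \sum_(a < n) \sum_(b < n)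
     om a b * (d a (g m v) * \sum_(c < n) Gam m b c * ginv c v) = 0.
Proof.
move=> gGam om_anti; pose Gm b := \matrix_(i, j) Gam i b j.
have dGE b : dG b = G *m Gm b + (Gm b)^T *m G.
  apply/matrixP => i j; rewrite !mxE gGam /Gam_low; congr (_ + _).
    by apply: eq_bigr => k _; rewrite !mxE.
  by apply: eq_bigr => k _; rewrite !mxE mulrC g_sym.
have GmGi b : Gm b *m Gi = \matrix_(i, j) \sum_(c < n) Gam i b c * ginv c j.
  by apply/matrixP => i j; rewrite !mxE; apply: eq_bigr => k _; rewrite !mxE.
(* Metric compatibility turns the contraction into half of the symmetric
   tr(g^{-1} dg_a g^{-1} dg_b). *)
have twice a b : \tr (dG a *m (Gm b *m Gi)^T) + \tr (dG a *m (Gm b *m Gi)^T)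
               = \tr (dG a *m Gi *m dG b *m Gi).
  rewrite (dGE b) mulmxDr mulmxDl mxtraceD trmx_mul trGi -!mulmxA GGi mulmx1.
  congr (_ + _); rewrite (mulmxA Gi G) GiG mul1mx -[RHS]mxtrace_tr.
  by rewrite !trmx_mul trGi trdG mxtrace_mulC.
apply: sum4_antisym => // a b.
rewrite !(sum_mul_mxtrace (fun m v => d _ (g m v))
  (fun m v => \sum_(c < n) Gam m _ c * ginv c v)).
by apply: addrr_inj; rewrite -!GmGi !twice mxtrace_GiC.
Qed.

End MetricInverse.

Lemma sum_qmul_transpose (R : numFieldType) (A : comAlgType R) (n : nat)
    (d : 'I_n -> A -> A) (om : 'I_n -> 'I_n -> A) (x y : 'I_n -> 'I_n -> A * A) :
  (forall m v, (x m v).1 = (x v m).1) -> (forall m v, (y m v).1 = (y v m).1) ->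
  \sum_(m < n) \sum_(v < n) (qmul d om (x m v) (y m v)).2
  = \sum_(m < n) \sum_(v < n) (qmul d om (x m v) (y v m)).2.
Proof.
move=> x_sym y_sym; pose f m v := (x m v).1 * (y m v).2.
have shift m v : (qmul d om (x m v) (y m v)).2
               = (qmul d om (x m v) (y v m)).2 + (f m v - f v m).
  by rewrite /f /qmul /= (y_sym m v) (x_sym v m); ring.
under eq_bigr do under eq_bigr do rewrite shift.
under eq_bigr do rewrite big_split /=.
rewrite big_split /= -[RHS]addr0; congr (_ + _).
under eq_bigr do rewrite sumrB.
by rewrite sumrB exchange_big subrr.
Qed.

Section QuantumPairing.
Variables (R : numFieldType) (A : comAlgType R) (n : nat) (d : 'I_n -> A -> A).
Variables (om : 'I_n -> 'I_n -> A) (Gam : 'I_n -> 'I_n -> 'I_n -> A).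
Variables (gtinv : 'I_n -> 'I_n -> A * A) (P : qform A n -> qform A n -> A * A).
Hypotheses (dD : derivations d) (PQ : quantum_inner d om Gam gtinv P).

Lemma qmulr1 x : qmul d om x (1, 0) = x.
Proof.
by case: x => x1 x2; rewrite /qmul /= pbr1r // scaler0 !mulr1 mulr0 add0r addr0.
Qed.

Lemma qmul0l y z : qmul d om (0, y) z = (0, y * z.1).
Proof. by rewrite /qmul /= pbr0l // scaler0 !mul0r add0r !addr0. Qed.

Lemma fdotr1 eta : fdotr d om Gam eta (1, 0) = eta.
Proof.
apply: functional_extensionality => c; rewrite /fdotr /= big1 ?scaler0 ?subr0.
  by rewrite !mulr1 mulr0 addr0; case: (eta c).
by move=> a _; rewrite big1 // => b _; rewrite derivation1 // mulr0 mul0r.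
Qed.

Lemma fdotl0 y eta : fdotl d om Gam (0, y) eta = fun c => (0, y * (eta c).1).
Proof.
apply: functional_extensionality => c; rewrite /fdotl /= big1 ?scaler0 ?addr0.
  by rewrite !mul0r add0r.
by move=> a _; rewrite big1 // => b _; rewrite derivation0 // mulr0 mul0r.
Qed.

Lemma nabla_dx m b c : nabla_form d Gam (fun k => (dx m k).1) b c = - Gam m b c.
Proof. by rewrite /nabla_form derivation_delta // sub0r sum_delta. Qed.

(* nabla dx^m = - Gam^m, and fdotr, fdotl carry opposite halves of the nabla term. *)
Lemma fdotr_dx f m : fdotr d om Gam (dx m) f
  = fadd (fdotl d om Gam f (dx m))
         (fun c => (0, \sum_(a < n) \sum_(b < n) om a b * d a f.1 * Gam m b c)).
Proof.
apply: functional_extensionality => c; rewrite /fdotr /fdotl /fadd /qadd /=.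
under eq_bigr do under eq_bigr do rewrite nabla_dx mulrN.
under eq_bigr do rewrite sumrN; rewrite sumrN.
set Y := \sum_(a < n) _; rewrite -{3}[Y]scale_halfRD scalerN.
by congr pair; [rewrite mulrC addr0 | ring].
Qed.

Lemma pairing0l zeta : P (fun _ => (0, 0)) zeta = (0, 0).
Proof.
have [Padd _ _ _ _] := PQ; have := Padd (fun _ => (0, 0)) (fun _ => (0, 0)) zeta.
have -> : fadd (fun _ : 'I_n => (0 : A, 0 : A)) (fun _ => (0, 0)) = (fun _ => (0, 0)).
  by apply: functional_extensionality => c; rewrite /fadd /qadd /= addr0.
case: (P _ zeta) => p1 p2 [p10 p20].
by congr pair; [apply: (addrI p1) | apply: (addrI p2)]; rewrite addr0.
Qed.

Lemma pairing_suml (s : seq 'I_n) (F : 'I_n -> qform A n) zeta :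
  P (fun c => (\sum_(i <- s) (F i c).1, \sum_(i <- s) (F i c).2)) zeta
  = (\sum_(i <- s) (P (F i) zeta).1, \sum_(i <- s) (P (F i) zeta).2).
Proof.
have [Padd _ _ _ _] := PQ; elim: s => [|i s IHs].
  rewrite !big_nil -(pairing0l zeta); congr P.
  by apply: functional_extensionality => c; rewrite !big_nil.
have -> : (fun c => (\sum_(j <- i :: s) (F j c).1, \sum_(j <- i :: s) (F j c).2))
   = fadd (F i) (fun c => (\sum_(j <- s) (F j c).1, \sum_(j <- s) (F j c).2)).
  by apply: functional_extensionality => c; rewrite /fadd /qadd !big_cons.
by rewrite Padd IHs !big_cons.
Qed.

Lemma pairing_fdotl_dx f m v :
  P (fdotl d om Gam f (dx m)) (dx v) = qmul d om f (gtinv m v).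
Proof.
have [_ _ _ Pbimod Pdx] := PQ.
by rewrite -[dx v]fdotr1 Pbimod Pdx qmulr1.
Qed.

Lemma pairing_lambda_dx (y : 'I_n -> A) v :
  P (fun c => (0, y c)) (dx v) = (0, \sum_(c < n) y c * (gtinv c v).1).
Proof.
have -> : (fun c => (0, y c)) = (fun c' =>
    (\sum_(c < n) (fdotl d om Gam (0, y c) (dx c) c').1,
     \sum_(c < n) (fdotl d om Gam (0, y c) (dx c) c').2)).
  apply: functional_extensionality => c'.
  congr pair; under eq_bigr do rewrite fdotl0 /=; first by rewrite big1.
  by under eq_bigr do rewrite mulrC eq_sym; rewrite sum_delta.
rewrite pairing_suml big1 => [|c _]; last by rewrite pairing_fdotl_dx qmul0l.
by congr pair; apply: eq_bigr => c _; rewrite pairing_fdotl_dx qmul0l.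
Qed.

Lemma pairing_fdotr_dx f m v :
  P (fdotr d om Gam (dx m) f) (dx v)
  = qadd (qmul d om f (gtinv m v))
      (0, \sum_(a < n) \sum_(b < n)
            om a b * (d a f.1 * \sum_(c < n) Gam m b c * (gtinv c v).1)).
Proof.
have [Padd _ _ _ _] := PQ.
rewrite fdotr_dx Padd pairing_fdotl_dx pairing_lambda_dx; congr (qadd _ (0, _)).
under eq_bigr do rewrite mulr_suml; rewrite exchange_big; apply: eq_bigr => a _.
under eq_bigr do rewrite mulr_suml; rewrite exchange_big; apply: eq_bigr => b _.
by rewrite !mulr_sumr; apply: eq_bigr => c _; rewrite !mulrA.
Qed.

Lemma sum_pairing_fdotr_dx_snd (F : 'I_n -> 'I_n -> A * A) :
  \sum_(m < n) \sum_(v < n) (P (fdotr d om Gam (dx m) (F m v)) (dx v)).2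
  = \sum_(m < n) \sum_(v < n) (qmul d om (F m v) (gtinv m v)).2
    + \sum_(m < n) \sum_(v < n) \sum_(a < n) \sum_(b < n)
        om a b * (d a (F m v).1 * \sum_(c < n) Gam m b c * (gtinv c v).1).
Proof.
rewrite -big_split; apply: eq_bigr => m _; rewrite -big_split; apply: eq_bigr => v _.
by rewrite pairing_fdotr_dx.
Qed.

End QuantumPairing.

Unset Implicit Arguments.
Set Strict Implicit.

Theorem proposition2p1 (R : numFieldType) (A : comAlgType R) (n : nat)
  (d : 'I_n -> A -> A) (om : 'I_n -> 'I_n -> A)
  (Gam : 'I_n -> 'I_n -> 'I_n -> A)
  (g ginv : 'I_n -> 'I_n -> A)
  (gtinv : 'I_n -> 'I_n -> A * A)
  (P : qform A n -> qform A n -> A * A) :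
  derivations d ->
  (forall m v, g m v = g v m) ->
  (forall m c, \sum_(v < n) g m v * ginv v c = (m == c)%:R) ->
  (forall m c, \sum_(v < n) ginv m v * g v c = (m == c)%:R) ->
  metric_compat d g Gam ->
  (forall a b, om a b = - om b a) ->
  jacobi d om ->
  poisson_compat d om Gam ->
  (forall m c, qsum (fun v => qmul d om (gtilde d om Gam g m v) (gtinv v c))
               = ((m == c)%:R, 0)) ->
  (forall c m, qsum (fun v => qmul d om (gtinv c v) (gtilde d om Gam g v m))
               = ((c == m)%:R, 0)) ->
  quantum_inner d om Gam gtinv P ->
  let dim1 := qsum2 (fun m v => P (fdotr d om Gam (dx m) (gtilde d om Gam g m v)) (dx v)) in
  dim1 = (n%:R, halfR R *: \sum_(m < n) \sum_(v < n) pbr d om (g m v) (ginv m v))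
  /\ dim1 = (n%:R, halfR R *: \sum_(m < n) \sum_(v < n) \sum_(a < n) \sum_(b < n)
                      om a b * d a (g m v) * d b (ginv m v)).
Proof.
move=> dD g_sym g_ginv ginv_g gGam om_anti _ _ gt_gtinv _ PQ dim1.
have gtinv1 : forall m v, (gtinv m v).1 = ginv m v.
  apply: (right_inverse_unique ginv_g (h := fun m v => (gtinv m v).1)) => m c.
  by have := congr1 fst (gt_gtinv m c).
suff -> : dim1 = (n%:R, 0).
  by rewrite /pbr (pbr_metric_inverse_sum dD g_sym g_ginv ginv_g om_anti) scaler0.
rewrite /dim1 /qsum2; congr pair.
  under eq_bigr do under eq_bigr do rewrite (pairing_fdotr_dx dD PQ) /= gtinv1 addr0.
  under eq_bigr do under eq_bigr do rewrite (ginv_sym g_sym g_ginv).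
  by under eq_bigr do rewrite g_ginv eqxx; rewrite sumr_const card_ord.
rewrite (sum_pairing_fdotr_dx_snd dD PQ).
under [X in _ + X]eq_bigr do under eq_bigr do under eq_bigr do
  under eq_bigr do under eq_bigr do rewrite gtinv1.
rewrite (christoffel_metric_inverse_sum g_sym g_ginv ginv_g gGam om_anti) addr0.
have gtinv1_sym m v : (gtinv m v).1 = (gtinv v m).1.
  by rewrite !gtinv1 (ginv_sym g_sym g_ginv).
rewrite (sum_qmul_transpose (x := gtilde d om Gam g) _ _ g_sym gtinv1_sym).
by rewrite big1 // => m _; have := congr1 snd (gt_gtinv m m).
Qed.
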